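(* Let $\Sigma_\pm\subset\mathbb C^3_{(B,A,r)}$ be the set of parameters for which the monodromy $\mathrm{Mon}$ fixes the point $\pm i$. Then $\Sigma_\pm$ consists exactly of those parameters for which $\mathrm{Mon}$ is a parabolic or identical Möbius transformation fixing $\pm i$. Moreover, every parameter $(B,A,r)$ for which $\mathrm{Mon}$ is parabolic or the identity lies in $\Sigma_+\cup\Sigma_-$.
   Context: For complex parameters $(B,A,r)$ with $r\neq0$ set $\omega=\frac1{2r}$, $l=2Br$, $\mu=Ar$, and consider the Riccati equation $\frac{d\Phi}{dz}=z^{-2}\left((lz+\mu(z^2+1))\Phi-\frac{z}{2i\omega}(\Phi^2-1)\right)$ on the Riemann sphere, $z\in\mathbb C^*$. It is the projectivization of a linear system, so its monodromy transformation $\mathrm{Mon}$, acting on initial conditions $\Phi(1)\in\overline{\mathbb C}$ by analytic continuation of solutions along the positively oriented unit circle in the $z$-line, is a Möbius transformation of the Riemann sphere. A Möbius transformation is parabolic if it is not the identity and has exactly one fixed point. *)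

From Stdlib Require Import Reals.
From Coquelicot Require Import Coquelicot.
Open Scope R_scope.

Definition omega (r : C) : C := (/ (2 * r))%C.
Definition ell (B r : C) : C := (2 * B * r)%C.
Definition mu (A r : C) : C := (A * r)%C.

Definition riccati_rhs (B A r z Phi : C) : C :=
  (/ (z * z) * ((ell B r * z + mu A r * (z * z + 1)) * Phi
                - z / (2 * Ci * omega r) * (Phi * Phi - 1)))%C.

(* Linear system (u,v)' = M(z) (u,v) whose projectivization Phi = u/v is the
   Riccati equation:  M = [[b, k],[k, 0]] with
   b = (l z + mu (z^2+1))/z^2, k = 1/(2 i omega z).
   Indeed (u/v)' = k + b Phi - k Phi^2 = riccati_rhs. *)
Definition sys_b (B A r z : C) : C :=
  ((ell B r * z + mu A r * (z * z + 1)) / (z * z))%C.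
Definition sys_k (r z : C) : C := (/ (2 * Ci * omega r * z))%C.

Definition circ (t : R) : C := (cos t, sin t).

Record mat2 := Mat2 { m11 : C; m12 : C; m21 : C; m22 : C }.

(* (u,v) : R -> C*C solves the linear system pulled back along z = e^{it}:
   d/dt (u,v) = z'(t) M(z(t)) (u,v),  z'(t) = i e^{it}. *)
Definition solves_sys (B A r : C) (u v : R -> C) : Prop :=
  forall t, 0 <= t <= 2 * PI ->
    is_derive u t (Ci * circ t * (sys_b B A r (circ t) * u t + sys_k r (circ t) * v t))%C /\
    is_derive v t (Ci * circ t * (sys_k r (circ t) * u t))%C.

Definition is_monodromy_matrix (B A r : C) (T : mat2) : Prop :=
  exists u1 v1 u2 v2 : R -> C,
    solves_sys B A r u1 v1 /\ solves_sys B A r u2 v2 /\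
    u1 0 = 1%C /\ v1 0 = 0%C /\ u2 0 = 0%C /\ v2 0 = 1%C /\
    m11 T = u1 (2 * PI) /\ m21 T = v1 (2 * PI) /\
    m12 T = u2 (2 * PI) /\ m22 T = v2 (2 * PI).

(* Riemann sphere: Some z for z in C, None for infinity. *)
Definition sphere := option C.

Definition mobius (T : mat2) (p : sphere) : sphere :=
  match p with
  | Some z =>
      let den := (m21 T * z + m22 T)%C in
      match Req_EM_T (fst den) 0, Req_EM_T (snd den) 0 with
      | left _, left _ => None
      | _, _ => Some ((m11 T * z + m12 T) / den)%C
      end
  | None =>
      match Req_EM_T (fst (m21 T)) 0, Req_EM_T (snd (m21 T)) 0 with
      | left _, left _ => None
      | _, _ => Some (m11 T / m21 T)%C
      end
  end.

Definition fixes (f : sphere -> sphere) (p : sphere) : Prop := f p = p.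
Definition is_identity (f : sphere -> sphere) : Prop := forall p, f p = p.
Definition is_parabolic (f : sphere -> sphere) : Prop :=
  ~ is_identity f /\ exists p, fixes f p /\ forall q, fixes f q -> q = p.

Definition ip : C := Ci.
Definition im : C := (- Ci)%C.

From Stdlib Require Import Reals Lra Classical.
From Coquelicot Require Import Coquelicot.
Open Scope R_scope.

(* Along z = e^{it} the linear system becomes u' = a(t) u + r v, v' = r u with
   a(t) = i (l + 2 mu cos t).  Since a(2 pi - t) = a(t), the system is
   reversible: the pairing u1(t) u2(2 pi - t) + v1(t) v2(2 pi - t) of two
   solutions is constant, which makes the monodromy matrix symmetric; by
   Liouville's formula it is also invertible.  A symmetric Moebius map commutes
   with the involution z |-> -1/z, whose fixed points are +-i, so a unique fixed
   point must be +-i.  Conversely, if a symmetric map with lower-left entry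
   c <> 0 fixes s = +-i, its fixed-point equation reduces to c (z - s)^2 = 0. *)

(* A failed unification between distinct real expressions (or a [cbn] through
   [exp], [cos], [sin]) can run for minutes, so the derivation steps below give
   the structure [R_AbsRing] and the hypotheses explicitly instead of searching. *)
Ltac derive_then_ring tac :=
  match goal with |- is_derive ?f ?x ?l =>
    refine (eq_ind _ (is_derive f x) _ l _);
    [tac | first [apply injective_projections; cbn -[exp cos sin]; ring
                 | cbn -[exp cos sin]; ring]]
  end.

Lemma is_derive_C (f : R -> C) (x : R) (l : C) :
  is_derive f x l <->
  is_derive (fun t => fst (f t)) x (fst l) /\ is_derive (fun t => snd (f t)) x (snd l).
Proof.
  set (RxR := prod_NormedModule R_AbsRing R_NormedModule R_NormedModule).
  unfold is_derive; split.
  - intros H; split; eapply filterdiff_ext_lin.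
    + apply (filterdiff_comp f (fun p : RxR => fst p) _ (fun p : RxR => fst p) H).
      apply filterdiff_linear, is_linear_fst.
    + reflexivity.
    + apply (filterdiff_comp f (fun p : RxR => snd p) _ (fun p : RxR => snd p) H).
      apply filterdiff_linear, is_linear_snd.
    + reflexivity.
  - intros [H1 H2].
    pose proof (filterdiff_comp_2 (K := R_AbsRing) (W := RxR)
      (fun t => fst (f t)) (fun t => snd (f t)) (fun a b => (a, b)) _ _
      (fun a b => (a, b)) H1 H2) as H.
    eapply filterdiff_ext; [| eapply filterdiff_ext_lin; [apply H |]].
    + intros y; cbn; destruct (f y); reflexivity.
    + apply filterdiff_linear, is_linear_prod; [apply is_linear_fst | apply is_linear_snd].
    + intros y; destruct l; reflexivity.
Qed.

Lemma is_derive_Cmult (f g : R -> C) (x : R) (df dg : C) :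
  is_derive f x df -> is_derive g x dg ->
  is_derive (fun t => f t * g t)%C x (df * g x + f x * dg)%C.
Proof.
  rewrite !is_derive_C; intros [f1 f2] [g1 g2]; split; cbn.
  - derive_then_ring ltac:(apply (@is_derive_minus R_AbsRing);
      apply (@is_derive_mult R_AbsRing); first [eassumption | exact Rmult_comm]).
  - derive_then_ring ltac:(apply (@is_derive_plus R_AbsRing);
      apply (@is_derive_mult R_AbsRing); first [eassumption | exact Rmult_comm]).
Qed.

Lemma is_derive_RtoC (h : R -> R) (x dh : R) :
  is_derive h x dh -> is_derive (fun t => RtoC (h t)) x (RtoC dh).
Proof.
  intros H; apply is_derive_C; split; [exact H | apply (is_derive_const (K := R_AbsRing) 0)].
Qed.

Lemma is_derive_reflect (f : R -> C) (c x : R) (df : C) :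
  is_derive f (c - x) df -> is_derive (fun t => f (c - t)) x (- df)%C.
Proof.
  intros H.
  derive_then_ring ltac:(apply (is_derive_comp f (fun t => c - t)); [exact H |
    apply (@is_derive_minus R_AbsRing); [apply is_derive_const | apply is_derive_id]]).
Qed.

Definition Cexp (w : C) : C := (exp (fst w) * cos (snd w), exp (fst w) * sin (snd w)).

Lemma is_derive_Cexp (g : R -> C) (x : R) (dg : C) :
  is_derive g x dg -> is_derive (fun t => Cexp (g t)) x (dg * Cexp (g x))%C.
Proof.
  rewrite !is_derive_C; intros [g1 g2].
  pose proof (is_derive_comp exp _ x _ _ (is_derive_exp _) g1) as exp'.
  pose proof (is_derive_comp cos _ x _ _ (is_derive_cos _) g2) as cos'.
  pose proof (is_derive_comp sin _ x _ _ (is_derive_sin _) g2) as sin'.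
  split; cbn -[exp cos sin].
  - derive_then_ring ltac:(apply (@is_derive_mult R_AbsRing);
                           [exact exp' | exact cos' | exact Rmult_comm]).
  - derive_then_ring ltac:(apply (@is_derive_mult R_AbsRing);
                           [exact exp' | exact sin' | exact Rmult_comm]).
Qed.

Lemma Cexp_neq0 (w : C) : Cexp w <> 0%C.
Proof.
  intros E; injection E as E1 E2.
  pose proof (exp_pos (fst w)); pose proof (sin2_cos2 (snd w)); unfold Rsqr in *.
  apply Rmult_integral in E1 as [E1 | E1]; [lra |].
  apply Rmult_integral in E2 as [E2 | E2]; [lra |].
  rewrite E1, E2 in *; lra.
Qed.

Lemma Cmult_integral (x y : C) : (x * y)%C = 0%C -> x = 0%C \/ y = 0%C.
Proof.
  intros E; apply NNPP; intros Hxy; apply not_or_and in Hxy as [Hx Hy].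
  exact (Cmult_neq_0 x y Hx Hy E).
Qed.

Lemma Csquare_eq_m1 (z : C) : (z * z)%C = (-1)%C -> z = Ci \/ z = (- Ci)%C.
Proof.
  intros H.
  assert (E : ((z - Ci) * (z + Ci))%C = 0%C).
  { replace ((z - Ci) * (z + Ci))%C with (z * z - Ci * Ci)%C by ring.
    rewrite H; apply injective_projections; cbn; ring. }
  destruct (Cmult_integral _ _ E) as [E1 | E1]; [left | right].
  - replace z with ((z - Ci) + Ci)%C by ring; rewrite E1; ring.
  - replace z with ((z + Ci) - Ci)%C by ring; rewrite E1; ring.
Qed.

Section Linear_system.

Variables (a : R -> C) (k : C) (L : R).
Hypothesis L_pos : 0 < L.

Definition solves_on (u v : R -> C) : Prop :=
  forall t, 0 <= t <= L ->
    is_derive u t (a t * u t + k * v t)%C /\ is_derive v t (k * u t)%C.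

Lemma reversible_pairing (u1 v1 u2 v2 : R -> C) :
  (forall t, 0 <= t <= L -> a (L - t) = a t) ->
  solves_on u1 v1 -> solves_on u2 v2 ->
  (u1 0 * u2 L + v1 0 * v2 L = u1 L * u2 0 + v1 L * v2 0)%C.
Proof.
  intros a_rev S1 S2.
  set (f := fun t => (u1 t * u2 (L - t)%R + v1 t * v2 (L - t)%R)%C).
  assert (f' : forall t, 0 <= t <= L -> is_derive f t zero).
  { intros t Ht.
    destruct (S1 t Ht) as [Du1 Dv1].
    destruct (S2 (L - t)) as [Du2 Dv2]; [lra |].
    rewrite a_rev in Du2 by lra.
    unfold f; derive_then_ring ltac:(apply (@is_derive_plus R_AbsRing); apply is_derive_Cmult;
      solve [eassumption | apply is_derive_reflect; eassumption]). }
  pose proof (eq_is_derive f 0 L f' L_pos) as E; unfold f in E.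
  rewrite Rminus_0_r, Rminus_diag in E; exact E.
Qed.

Lemma liouville_wronskian (P u1 v1 u2 v2 : R -> C) :
  (forall t, 0 <= t <= L -> is_derive P t (a t)) ->
  solves_on u1 v1 -> solves_on u2 v2 ->
  ((u1 L * v2 L - u2 L * v1 L) * Cexp (- P L) =
   (u1 0 * v2 0 - u2 0 * v1 0) * Cexp (- P 0))%C.
Proof.
  intros P' S1 S2.
  set (f := fun t => ((u1 t * v2 t - u2 t * v1 t) * Cexp (- P t))%C).
  assert (f' : forall t, 0 <= t <= L -> is_derive f t zero).
  { intros t Ht.
    destruct (S1 t Ht) as [Du1 Dv1]; destruct (S2 t Ht) as [Du2 Dv2].
    unfold f; derive_then_ring ltac:(apply is_derive_Cmult;
      [apply (@is_derive_minus R_AbsRing); apply is_derive_Cmult; eassumption |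
       apply is_derive_Cexp, (@is_derive_opp R_AbsRing), P', Ht]). }
  symmetry; exact (eq_is_derive f 0 L f' L_pos).
Qed.

End Linear_system.

Lemma circ_neq0 (t : R) : circ t <> 0%C.
Proof.
  intros E; injection E as E1 E2.
  pose proof (sin2_cos2 t); unfold Rsqr in *; rewrite E1, E2 in *; lra.
Qed.

Lemma circ_add_inv (t : R) : (circ t + / circ t)%C = RtoC (2 * cos t).
Proof.
  pose proof (sin2_cos2 t) as S; unfold Rsqr in S.
  unfold circ, Cinv; apply injective_projections; cbn -[cos sin];
    replace (cos t * (cos t * 1) + sin t * (sin t * 1)) with 1 by lra; field.
Qed.

Definition circle_coef (B A r : C) (t : R) : C :=
  (Ci * (ell B r + mu A r * RtoC (2 * cos t)))%C.

Definition circle_primitive (B A r : C) (t : R) : C :=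
  (Ci * (ell B r * RtoC t + mu A r * RtoC (2 * sin t)))%C.

Lemma circle_coef_reflect (B A r : C) (t : R) :
  circle_coef B A r (2 * PI - t) = circle_coef B A r t.
Proof.
  unfold circle_coef; rewrite cos_minus, cos_2PI, sin_2PI.
  replace (1 * cos t + 0 * sin t) with (cos t) by ring; reflexivity.
Qed.

Lemma is_derive_circle_primitive (B A r : C) (t : R) :
  is_derive (circle_primitive B A r) t (circle_coef B A r t).
Proof.
  assert (const' : forall c : C, is_derive (fun _ : R => c) t zero)
    by (intros c; apply is_derive_const).
  pose proof (is_derive_Cmult _ _ t _ _ (const' (ell B r))
                (is_derive_RtoC _ _ _ (is_derive_id t))) as lin'.
  pose proof (is_derive_Cmult _ _ t _ _ (const' (mu A r))
                (is_derive_RtoC _ _ _ (is_derive_scal _ _ 2 _ (is_derive_sin t)))) as sin'.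
  derive_then_ring ltac:(exact (is_derive_Cmult _ _ t _ _ (const' Ci)
                                  (is_derive_plus _ _ t _ _ lin' sin'))).
Qed.

Lemma solves_sys_circle (B A r : C) (u v : R -> C) :
  r <> 0%C -> solves_sys B A r u v -> solves_on (circle_coef B A r) r (2 * PI) u v.
Proof.
  intros r_neq0 S t Ht; destruct (S t Ht) as [Du Dv].
  assert (Ci_neq0 : Ci <> 0%C) by (intros E; injection E; lra).
  assert (two_neq0 : (2 : C) <> 0%C) by (intros E; injection E; lra).
  assert (Hb : (Ci * circ t * sys_b B A r (circ t) = circle_coef B A r t)%C).
  { unfold sys_b, circle_coef; rewrite <- circ_add_inv.
    pose proof (circ_neq0 t); field; assumption. }
  assert (Hk : (Ci * circ t * sys_k r (circ t) = r)%C).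
  { unfold sys_k, omega; pose proof (circ_neq0 t); field; auto. }
  split.
  - replace (circle_coef B A r t * u t + r * v t)%C with
      (Ci * circ t * (sys_b B A r (circ t) * u t + sys_k r (circ t) * v t))%C; [exact Du |].
    transitivity ((Ci * circ t * sys_b B A r (circ t)) * u t
                  + (Ci * circ t * sys_k r (circ t)) * v t)%C; [ring | now rewrite Hb, Hk].
  - replace (r * u t)%C with (Ci * circ t * (sys_k r (circ t) * u t))%C; [exact Dv |].
    transitivity ((Ci * circ t * sys_k r (circ t)) * u t)%C; [ring | now rewrite Hk].
Qed.

Definition det2 (T : mat2) : C := (m11 T * m22 T - m12 T * m21 T)%C.

Lemma monodromy_symmetric (B A r : C) (T : mat2) :
  r <> 0%C -> is_monodromy_matrix B A r T -> m12 T = m21 T.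
Proof.
  intros r_neq0 (u1 & v1 & u2 & v2 & S1 & S2 & u10 & v10 & u20 & v20 & _ & E21 & E12 & _).
  pose proof (reversible_pairing (circle_coef B A r) r (2 * PI) Rgt_2PI_0 u1 v1 u2 v2
    (fun t _ => circle_coef_reflect B A r t)
    (solves_sys_circle B A r u1 v1 r_neq0 S1)
    (solves_sys_circle B A r u2 v2 r_neq0 S2)) as E.
  rewrite u10, v10, u20, v20 in E; rewrite E12, E21.
  transitivity (1 * u2 (2 * PI)%R + 0 * v2 (2 * PI)%R)%C; [ring |].
  rewrite E; ring.
Qed.

Lemma monodromy_det_neq0 (B A r : C) (T : mat2) :
  r <> 0%C -> is_monodromy_matrix B A r T -> det2 T <> 0%C.
Proof.
  intros r_neq0 (u1 & v1 & u2 & v2 & S1 & S2 & u10 & v10 & u20 & v20 & E11 & E21 & E12 & E22).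
  pose proof (liouville_wronskian (circle_coef B A r) r (2 * PI) Rgt_2PI_0
    (circle_primitive B A r) u1 v1 u2 v2
    (fun t _ => is_derive_circle_primitive B A r t)
    (solves_sys_circle B A r u1 v1 r_neq0 S1)
    (solves_sys_circle B A r u2 v2 r_neq0 S2)) as E.
  rewrite u10, v10, u20, v20 in E.
  unfold det2; rewrite E11, E12, E21, E22; intros W0.
  rewrite W0, Cmult_0_l in E.
  apply (Cexp_neq0 (- circle_primitive B A r 0)).
  transitivity ((1 * 1 - 0 * 0) * Cexp (- circle_primitive B A r 0))%C; [ring |].
  rewrite <- E; reflexivity.
Qed.

Definition fix_poly (T : mat2) (z : C) : C :=
  (m11 T * z + m12 T - z * (m21 T * z + m22 T))%C.

Lemma C_eq0 (w : C) : fst w = 0 -> snd w = 0 -> w = 0%C.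
Proof. destruct w; cbn; intros -> ->; reflexivity. Qed.

Lemma mobius_Some_cases (T : mat2) (z : C) :
  ((m21 T * z + m22 T)%C = 0%C /\ mobius T (Some z) = None) \/
  ((m21 T * z + m22 T)%C <> 0%C /\
   mobius T (Some z) = Some ((m11 T * z + m12 T) / (m21 T * z + m22 T))%C).
Proof.
  unfold mobius; cbv zeta.
  destruct (Req_EM_T (fst (m21 T * z + m22 T)%C) 0) as [e1 | n1];
  destruct (Req_EM_T (snd (m21 T * z + m22 T)%C) 0) as [e2 | n2].
  - left; split; [apply C_eq0 | reflexivity]; assumption.
  - right; split; [intros E; apply n2; rewrite E | ]; reflexivity.
  - right; split; [intros E; apply n1; rewrite E | ]; reflexivity.
  - right; split; [intros E; apply n1; rewrite E | ]; reflexivity.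
Qed.

Lemma mobius_None_cases (T : mat2) :
  (m21 T = 0%C /\ mobius T None = None) \/
  (m21 T <> 0%C /\ mobius T None = Some (m11 T / m21 T)%C).
Proof.
  unfold mobius.
  destruct (Req_EM_T (fst (m21 T)) 0) as [e1 | n1];
  destruct (Req_EM_T (snd (m21 T)) 0) as [e2 | n2].
  - left; split; [apply C_eq0 | reflexivity]; assumption.
  - right; split; [intros E; apply n2; rewrite E | ]; reflexivity.
  - right; split; [intros E; apply n1; rewrite E | ]; reflexivity.
  - right; split; [intros E; apply n1; rewrite E | ]; reflexivity.
Qed.

Lemma fixes_Some (T : mat2) (z : C) :
  fixes (mobius T) (Some z) <-> (m21 T * z + m22 T)%C <> 0%C /\ fix_poly T z = 0%C.
Proof.
  unfold fixes, fix_poly.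
  destruct (mobius_Some_cases T z) as [[den0 ->] | [den ->]]; split.
  - discriminate.
  - intros [? _]; contradiction.
  - intros E; injection E as E; split; [exact den |].
    rewrite <- E at 2; field; exact den.
  - intros [_ E]; f_equal.
    transitivity ((m11 T * z + m12 T - z * (m21 T * z + m22 T)) / (m21 T * z + m22 T) + z)%C.
    + field; exact den.
    + rewrite E; field; exact den.
Qed.

Lemma fixes_None (T : mat2) : fixes (mobius T) None <-> m21 T = 0%C.
Proof.
  unfold fixes.
  destruct (mobius_None_cases T) as [[c0 ->] | [c ->]]; split; try tauto; discriminate.
Qed.

Lemma sym_mobius_fixing_sqrt_m1 (T : mat2) (s : C) :
  m12 T = m21 T -> (s * s + 1)%C = 0%C -> fixes (mobius T) (Some s) ->
  is_parabolic (mobius T) \/ is_identity (mobius T).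
Proof.
  intros Tsym s2 fix_s.
  pose proof fix_s as [den_s P_s]%fixes_Some.
  unfold fix_poly in P_s; rewrite Tsym in P_s.
  set (a := m11 T) in *; set (c := m21 T) in *; set (d := m22 T) in *.
  assert (s_neq0 : s <> 0%C).
  { intros ->; apply (f_equal fst) in s2; cbn in s2; lra. }
  destruct (classic (c = 0%C)) as [c0 | c_neq0].
  - right; intros [z |]; [| now apply fixes_None].
    assert (d_neq0 : d <> 0%C) by (intros E; apply den_s; rewrite c0, E; ring).
    assert (a_d : (a - d)%C = 0%C).
    { destruct (Cmult_integral s (a - d)) as [| E]; [| contradiction | exact E].
      rewrite <- P_s, c0; ring. }
    apply fixes_Some; unfold fix_poly; rewrite Tsym; fold a c d; split.
    + rewrite c0; intros E; apply d_neq0; rewrite <- E; ring.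
    + transitivity (z * (a - d) + c * (1 - z * z))%C; [ring |].
      rewrite a_d, c0; ring.
  - left; split.
    + intros T_id; apply c_neq0, fixes_None, T_id.
    + exists (Some s); split; [exact fix_s |].
      intros [z |] fix_z; [| now apply fixes_None in fix_z].
      apply fixes_Some in fix_z as [_ P_z].
      unfold fix_poly in P_z; rewrite Tsym in P_z; fold a c d in P_z.
      (* c (z - s)^2 is a combination of the fixed-point equations at z and s
         and of s^2 + 1 = 0 *)
      assert (Q : (c * ((z - s) * (z - s)))%C =
        (- (a * z + c - z * (c * z + d)) - z * s * (a * s + c - s * (c * s + d))
         + (s * s + 1) * (c - z * (d - a) - c * s * z))%C) by ring.
      rewrite P_z, P_s, s2 in Q.
      destruct (Cmult_integral c ((z - s) * (z - s))) as [| E]; [| contradiction |].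
      { rewrite Q; ring. }
      destruct (Cmult_integral _ _ E) as [E' | E'];
        f_equal; replace z with ((z - s) + s)%C by ring; rewrite E'; ring.
Qed.

Lemma sym_mobius_fixes_neg_inv (T : mat2) (z : C) :
  m12 T = m21 T -> det2 T <> 0%C -> z <> 0%C ->
  fixes (mobius T) (Some z) -> fixes (mobius T) (Some (- / z))%C.
Proof.
  intros Tsym det z_neq0 [_ P_z]%fixes_Some.
  unfold det2 in det; unfold fix_poly in *; rewrite Tsym in *.
  set (a := m11 T) in *; set (c := m21 T) in *; set (d := m22 T) in *.
  assert (P_w : (a * (- / z) + c - (- / z) * (c * (- / z) + d))%C = 0%C).
  { transitivity (- (a * z + c - z * (c * z + d)) / (z * z))%C; [field; exact z_neq0 |].
    rewrite P_z; field; exact z_neq0. }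
  apply fixes_Some; unfold fix_poly; rewrite Tsym; fold a c d; split; [| exact P_w].
  intros den_w; apply det.
  transitivity (a * (c * (- / z) + d) - c * (a * (- / z) + c - (- / z) * (c * (- / z) + d))
                - c * (- / z) * (c * (- / z) + d))%C; [ring |].
  rewrite P_w, den_w; ring.
Qed.

Lemma sym_mobius_fixes_zero (T : mat2) :
  m12 T = m21 T -> det2 T <> 0%C -> fixes (mobius T) None -> fixes (mobius T) (Some (RtoC 0)).
Proof.
  intros Tsym det c0%fixes_None.
  unfold det2 in det; rewrite Tsym, c0 in det.
  apply fixes_Some; unfold fix_poly; rewrite Tsym, c0; split.
  - intros E; apply det; transitivity (m11 T * (0 * 0 + m22 T))%C; [ring | rewrite E; ring].
  - ring.
Qed.

Lemma sym_mobius_parabolic_fixes_sqrt_m1 (T : mat2) :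
  m12 T = m21 T -> det2 T <> 0%C -> is_parabolic (mobius T) ->
  fixes (mobius T) (Some Ci) \/ fixes (mobius T) (Some (- Ci))%C.
Proof.
  intros Tsym det [_ [[z |] [fix_p uniq]]].
  - assert (z_neq0 : z <> 0%C).
    { intros ->; pose proof fix_p as [_ P0]%fixes_Some.
      assert (inf : fixes (mobius T) None).
      { apply fixes_None; rewrite <- Tsym, <- P0; unfold fix_poly; ring. }
      discriminate (uniq None inf). }
    pose proof (uniq _ (sym_mobius_fixes_neg_inv T z Tsym det z_neq0 fix_p)) as E.
    injection E as E.
    assert (zz : (z * z)%C = (-1)%C).
    { rewrite <- E at 2; field; exact z_neq0. }
    destruct (Csquare_eq_m1 z zz) as [-> | ->]; [left | right]; exact fix_p.
  - discriminate (uniq _ (sym_mobius_fixes_zero T Tsym det fix_p)).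
Qed.

Theorem proposition5p5 :
  forall (B A r : C) (T : mat2), r <> 0%C -> is_monodromy_matrix B A r T ->
    (forall s : C, (s = ip \/ s = im) ->
       (fixes (mobius T) (Some s) <->
        ((is_parabolic (mobius T) \/ is_identity (mobius T)) /\ fixes (mobius T) (Some s))))
    /\
    ((is_parabolic (mobius T) \/ is_identity (mobius T)) ->
       fixes (mobius T) (Some ip) \/ fixes (mobius T) (Some im)).
Proof.
  intros B A r T r_neq0 mono.
  pose proof (monodromy_symmetric B A r T r_neq0 mono) as Tsym.
  pose proof (monodromy_det_neq0 B A r T r_neq0 mono) as Tdet.
  split.
  - intros s s_pm; split; [| tauto].
    intros fix_s; split; [| exact fix_s].
    apply (sym_mobius_fixing_sqrt_m1 T s Tsym); [| exact fix_s].
    destruct s_pm as [-> | ->]; apply injective_projections; cbn; ring.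
  - intros [parabolic | identity].
    + exact (sym_mobius_parabolic_fixes_sqrt_m1 T Tsym Tdet parabolic).
    + left; apply identity.
Qed.
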